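(* Let $\delta\ge1$ be an integer and $v\in V_\delta$. If a coalition structure $C^*$ of $N$ maximizes the social welfare $\mathsf{SW}(\cdot\mid v)$, then $|S|\le\delta$ for every $S\in C^*$.
   Context: Players: a finite set $N$. A characteristic function is $v:2^N\to\mathbb{R}_{\ge 0}$ with $v(\emptyset)=0$. There are fixed constants $0<\mathsf{min}\le\mathsf{max}$ and $v$ is monotone and bounded: $\mathsf{min}\le v(S)\le v(T)\le\mathsf{max}$ for all nonempty $S\subseteq T\subseteq N$. $V_\delta$ is the set of such $v$ with $\delta\cdot\mathsf{min}\le\mathsf{max}<(\delta+1)\cdot\mathsf{min}$. A coalition structure is a partition $C$ of $N$, with social welfare $\mathsf{SW}(C\mid v)=\sum_{S\in C}v(S)$. *)

From mathcomp Require Import all_boot all_order all_algebra.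
Set Implicit Arguments. Unset Strict Implicit. Unset Printing Implicit Defensive.
Import Order.TTheory GRing.Theory Num.Theory.
Local Open Scope ring_scope.

Definition char_fun (R : realFieldType) (N : finType) (mn mx : R)
    (v : {set N} -> R) : Prop :=
  [/\ v set0 = 0,
      (forall S, 0 <= v S) &
      (forall S T : {set N}, S != set0 -> S \subset T ->
         mn <= v S /\ v S <= v T /\ v T <= mx)].

Definition in_V_delta (R : realFieldType) (N : finType) (mn mx : R) (delta : nat)
    (v : {set N} -> R) : Prop :=
  char_fun mn mx v /\ delta%:R * mn <= mx /\ mx < (delta.+1)%:R * mn.

Definition coalition_structure (N : finType) (C : {set {set N}}) : bool :=
  partition C [set: N].

Definition SW (R : realFieldType) (N : finType) (v : {set N} -> R)
    (C : {set {set N}}) : R :=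
  \sum_(S in C) v S.

(** If a block [S] of a coalition structure has more than [delta] players,
    replace it by the singletons of its players.  Each singleton is worth at
    least [mn], so together they are worth at least [(delta + 1) mn > mx >= v S]:
    the welfare strictly increases, contradicting maximality. *)

From mathcomp Require Import all_boot all_order all_algebra.
From mathcomp Require Import lra.
Set Implicit Arguments. Unset Strict Implicit. Unset Printing Implicit Defensive.
Import Order.TTheory GRing.Theory Num.Theory.
Local Open Scope ring_scope.

Section Shatter.

Variable T : finType.
Implicit Types (P : {set {set T}}) (S D : {set T}).

Definition singletons S : {set {set T}} := [set [set x] | x in S].

Definition shatter P S : {set {set T}} := (P :\ S) :|: singletons S.

Lemma cover_singletons S : cover (singletons S) = S.
Proof.
apply/setP => x; apply/bigcupP/idP => [[_ /imsetP[y yS ->]] /set1P-> //|xS].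
by exists [set x]; [apply: imset_f | apply: set11].
Qed.

Lemma trivIset_singletons S : trivIset (singletons S).
Proof.
apply/trivIsetP => _ _ /imsetP[x _ ->] /imsetP[y _ ->] neq_xy.
by rewrite disjoints1 inE; apply: contraNneq neq_xy => ->.
Qed.

Lemma set0_notin_singletons S : set0 \notin singletons S.
Proof. by apply/imsetP => -[x _ /esym/eqP]; rewrite -cards_eq0 cards1. Qed.

Lemma shatter_partition P D S :
  partition P D -> S \in P -> partition (shatter P S) D.
Proof.
move=> partP SP; have /and3P[_ _ set0P] := partP.
have /and3P[/eqP coverD1S trivD1S _] := partitionD1 partP SP.
have coverS : cover (shatter P S) = D.
  rewrite /cover bigcup_setU -!/(cover _) coverD1S cover_singletons.
  apply/setP => x; rewrite !inE; case: (boolP (x \in S)) => [xS|]; last by rewrite orbF.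
  by rewrite orbT; apply/esym/(subsetP (partitionS partP SP)).
apply/and3P; split; first by rewrite coverS.
  apply: trivIsetU trivD1S (trivIset_singletons S) _.
  by rewrite coverD1S cover_singletons disjoints_subset setDE subsetIr.
by rewrite inE negb_or set0_notin_singletons inE negb_and set0P orbT.
Qed.

Lemma disjoint_shatter P S :
  trivIset P -> S \in P -> [disjoint P :\ S & singletons S].
Proof.
move=> trivP SP; rewrite -setI_eq0; apply/eqP/setP => A; rewrite !inE.
apply/negbTE/negP => /andP[/andP[neq_AS AP] /imsetP[x xS defA]].
have xA : x \in A by rewrite defA set11.
by move: neq_AS; rewrite -(def_pblock trivP AP xA) (def_pblock trivP SP xS) eqxx.
Qed.

Lemma big_shatter (R : nmodType) P S (F : {set T} -> R) :
  trivIset P -> S \in P ->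
  \sum_(A in shatter P S) F A + F S = \sum_(A in P) F A + \sum_(x in S) F [set x].
Proof.
move=> trivP SP; rewrite (big_setD1 _ SP) /= [F S + _]addrC.
rewrite (eq_bigl [predU P :\ S & singletons S]) => [|A]; last by rewrite inE.
rewrite bigU ?disjoint_shatter // big_imset //=; last by move=> x y _ _ /set1_inj.
by rewrite -addrA [_ + F S]addrC addrA.
Qed.

End Shatter.

Lemma char_fun_sum_singletons (R : realFieldType) (N : finType) (mn mx : R)
    (v : {set N} -> R) (S : {set N}) :
  char_fun mn mx v -> #|S|%:R * mn <= \sum_(x in S) v [set x].
Proof.
case=> _ _ vmon; rewrite -sum1_card natr_sum mulr_suml; apply: ler_sum => x _.
have x_neq0 : [set x] != set0 by rewrite -cards_eq0 cards1.
by have [+ _] := vmon _ _ x_neq0 (subxx _); rewrite mul1r.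
Qed.

Theorem lemma1 (R : realFieldType) (N : finType) (mn mx : R)
    (hmn : 0 < mn) (hmnmx : mn <= mx) (delta : nat) (hdelta : (1 <= delta)%N)
    (v : {set N} -> R) (hv : in_V_delta mn mx delta v)
    (Cstar : {set {set N}}) (hC : coalition_structure Cstar)
    (hmax : forall C : {set {set N}}, coalition_structure C -> SW v C <= SW v Cstar) :
  forall S, S \in Cstar -> (#|S| <= delta)%N.
Proof.
move=> S SC; rewrite leqNgt; apply/negP => big_S.
have [vchar [_ mx_lt]] := hv; have [_ _ vmon] := vchar.
have [_ [_ vS_le]] := vmon S S (partition_neq0 hC SC) (subxx S).
have singles_gt : mx < \sum_(x in S) v [set x].
  apply: (lt_le_trans mx_lt); apply: le_trans (char_fun_sum_singletons S vchar).
  by rewrite ler_pM2r // ler_nat.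
have := big_shatter v (partition_trivIset hC) SC.
have := hmax _ (shatter_partition hC SC); rewrite /SW; lra.
Qed.
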